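(* For every integer $N>1$, the number of self-complementary achiral necklaces on $2N$ beads is even.
   Context: Here a necklace on $2N$ beads is a circular arrangement of $2N$ beads, each colored with one of two colors, modulo cyclic rotation. It is achiral if it coincides (up to rotation) with its mirror reflection, and self-complementary if it coincides (up to rotation) with the necklace obtained by swapping the two colors. *)

From mathcomp Require Import all_boot.
Set Implicit Arguments. Unset Strict Implicit. Unset Printing Implicit Defensive.

Definition necklace (n : nat) (w : n.-tuple bool) : {set n.-tuple bool} :=
  [set rot_tuple k w | k : 'I_n].

Definition mirror (n : nat) (w : n.-tuple bool) : n.-tuple bool := rev_tuple w.
Definition complement (n : nat) (w : n.-tuple bool) : n.-tuple bool := map_tuple negb w.

Definition achiral (n : nat) (w : n.-tuple bool) : bool := mirror w \in necklace w.
Definition selfcomp (n : nat) (w : n.-tuple bool) : bool := complement w \in necklace w.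

Definition sc_achiral_necklaces (n : nat) : {set {set n.-tuple bool}} :=
  [set necklace w | w in [set w : n.-tuple bool | achiral w && selfcomp w]].

From mathcomp Require Import all_boot zify.
Set Implicit Arguments. Unset Strict Implicit. Unset Printing Implicit Defensive.

(** Words are handled as n-periodic colourings [nat -> bool] of the beads.  A
    self-complementary word has an antiperiod, and then exactly one antiperiod
    M among the dyadic divisors N / 2^i of N: two of them differ by a factor
    2^k with k > 0, and an antiperiod M makes every even multiple of M a
    period.  An achiral word is symmetric about some axis s, and s + M is odd.
    Rotating a word by t moves its axis by 2t and rotating it by M complements
    it, so each self-complementary achiral necklace contains exactly one
    canonical word: antiperiod M, axis 0 or 1 according to the parity of M,
    first bead 0.  The canonical words are paired off by a fixed-point-free
    involution: for M > 2, toggle in every block of length M the two beads at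
    the mirror positions 2 and M + axis - 2; the only canonical words with
    M = 1 (0101...) and M = 2 (0011...) exist together, exactly when N is a
    power of 2, and are swapped. *)

Lemma eqn_modP n a b : a = b %[mod n] <-> exists p q, a + p * n = b + q * n.
Proof.
split=> [eq_ab | [p [q eq_pq]]].
- exists (b %/ n), (a %/ n).
  by rewrite {1}(divn_eq a n) {2}(divn_eq b n) eq_ab; lia.
- by rewrite -(modnMDl p a) -(modnMDl q b) addnC eq_pq addnC.
Qed.

Lemma nth_rot (T : Type) (x0 : T) (s : seq T) k i : k <= size s -> i < size s ->
  nth x0 (rot k s) i = nth x0 s ((i + k) %% size s).
Proof.
move=> le_k lt_i; rewrite /rot nth_cat size_drop.
case: ltnP => [lt_ik | le_ik].
- by rewrite nth_drop modn_small; [rewrite addnC | lia].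
- rewrite nth_take; last by lia.
  have -> : i + k = (i - (size s - k)) + size s by lia.
  by rewrite modnDr modn_small //; lia.
Qed.

Lemma involution_card_even (T : finType) (A : {set T}) (g : T -> T) :
  {in A, forall x, g x \in A} -> {in A, involutive g} ->
  {in A, forall x, g x != x} -> ~~ odd #|A|.
Proof.
move=> gA gK g_neq.
(* B picks the element of smaller rank in each orbit {x, g x}. *)
pose B := [set x in A | enum_rank x < enum_rank (g x)].
have sBA : B \subset A by apply/subsetP => x; rewrite inE => /andP [].
have g_inj : {in B &, injective g}.
  by move=> x y /(subsetP sBA) Ax /(subsetP sBA) Ay gxy; rewrite -[x]gK // gxy gK.
have defAB : A :\: B = g @: B.
  apply/setP => x; rewrite !inE; apply/andP/imsetP => [[xNB Ax] | [y By ->]].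
  - exists (g x); last by rewrite gK.
    rewrite inE gA // gK //=; move: xNB; rewrite Ax /= -leqNgt => le_g.
    by rewrite ltn_neqAle le_g andbT val_eqE (inj_eq enum_rank_inj) g_neq.
  - have Ay := subsetP sBA y By.
    by move: By; rewrite !inE gK // gA // Ay /= -leqNgt => /ltnW.
rewrite -(cardsID B A) defAB card_in_imset //.
by rewrite (setIidPr sBA) addnn odd_double.
Qed.

Definition periodic (f : nat -> bool) p := forall x, f (x + p) = f x.
Definition antiperiodic (f : nat -> bool) p := forall x, f (x + p) = ~~ f x.

Section Periodicity.
Variable f : nat -> bool.

Lemma periodicMl p k : periodic f p -> periodic f (k * p).
Proof.
by move=> fp; elim: k => [|k IHk] x; rewrite ?addn0 // mulSn addnA IHk fp.
Qed.

Lemma periodic_gcd p q : 0 < p -> periodic f p -> periodic f q ->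
  periodic f (gcdn p q).
Proof.
move=> p_gt0 fp fq x; have [a _ /dvdnP [c def_c]] := Bezoutl q p_gt0.
by rewrite -(periodicMl a fq) -addnA def_c (periodicMl c fp).
Qed.

Lemma periodic_double_oddM h : periodic f (2 * h) ->
  forall c x, f (x + c * h) = f (x + odd c * h).
Proof.
move=> f2h c x; rewrite -{1}(odd_double_half c) mulnDl addnA -muln2 -mulnA.
exact: (periodicMl _ f2h).
Qed.

Lemma antiperiodicM h : antiperiodic f h ->
  forall c x, f (x + c * h) = odd c (+) f x.
Proof.
move=> fh c x; elim: c => [|c IHc]; first by rewrite addn0.
by rewrite mulSn addnCA addnC fh IHc /= negb_add.
Qed.

Lemma antiperiodic_gt0 p : antiperiodic f p -> 0 < p.
Proof. by case: p => // /(_ 0); case: (f 0). Qed.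

Lemma antiperiodic_double p : antiperiodic f p -> periodic f (2 * p).
Proof. by move=> fp x; rewrite (antiperiodicM fp). Qed.

Lemma antiperiodic_gcd p q : antiperiodic f p -> periodic f (2 * q) ->
  antiperiodic f (gcdn p q).
Proof.
move=> fp f2q; have p_gt0 := antiperiodic_gt0 fp.
have f2h : periodic f (2 * gcdn p q).
  rewrite muln_gcdr; apply: (periodic_gcd _ (antiperiodic_double fp) f2q).
  by rewrite muln_gt0.
have def_p : p = p %/ gcdn p q * gcdn p q by rewrite divnK ?dvdn_gcdl.
case odd_c: (odd (p %/ gcdn p q)) => x.
  by rewrite -(fp x) {2}def_p (periodic_double_oddM f2h) odd_c mul1n.
have := fp x; rewrite def_p (periodic_double_oddM f2h) odd_c mul0n addn0.
by case: (f x).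
Qed.

Lemma antiperiodic_dvd h t : antiperiodic f h -> h %| t ->
  periodic f t \/ antiperiodic f t.
Proof.
move=> fh /divnK def_t; case odd_c: (odd (t %/ h)); [right | left] => x;
  by rewrite -def_t (antiperiodicM fh) odd_c.
Qed.

Lemma antiperiodic_exp2 p k : antiperiodic f p -> antiperiodic f (2 ^ k * p) ->
  k = 0.
Proof.
case: k => // k fp /(_ 0); rewrite (antiperiodicM fp) expnS mul2n odd_double.
by case: (f 0).
Qed.

End Periodicity.

Lemma antiperiodic_shift f t p :
  antiperiodic f p -> antiperiodic (fun x => f (x + t)) p.
Proof. by move=> fp x; rewrite addnAC fp. Qed.

(* Invariance under the reflection x |-> s - x of Z/nZ. *)
Definition symmetric_about n (f : nat -> bool) s :=
  forall a b, a + b = s %[mod n] -> f a = f b.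

Lemma symmetric_about_shift n f s t :
  symmetric_about n f (s + 2 * t) -> symmetric_about n (fun x => f (x + t)) s.
Proof.
move=> fs a b /eqn_modP [p [q eq_pq]]; apply: fs.
by apply/eqn_modP; exists p, q; lia.
Qed.

Lemma symmetric_about_antiperiodic_odd n f s p : periodic f n -> p <= n ->
  antiperiodic f p -> symmetric_about n f s -> odd (s + p).
Proof.
move=> fn le_pn fp fs; apply/negP => /negP even_sp; pose c := (s + p)./2.
have def_s : c + (c + n - p) = s + n by rewrite /c; move: even_sp; lia.
have := fs c (c + n - p); rewrite def_s modnDr => /(_ erefl).
have := fp (c + n - p); rewrite subnK ?fn; last by lia.
by move=> ->; case: (f _).
Qed.

Section TwoAxes.
Variables (n : nat) (f : nat -> bool).
Hypothesis n_gt0 : 0 < n.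

Lemma symmetric_about_periodic s t : symmetric_about n f s ->
  symmetric_about n (fun x => f (x + t)) s -> periodic f (2 * t).
Proof.
move=> fs fts x; pose b := s + n.-1 * (x + t).
have def_b : x + t + b = (x + t) * n + s.
  by rewrite /b; case: n n_gt0 => //= m _; lia.
rewrite mul2n -addnn addnA (fts (x + t) b); last by rewrite def_b modnMDl.
by apply: fs; rewrite -addnA addnC [t + x]addnC def_b modnMDl.
Qed.

Lemma shift_periodic_or_antiperiodic s t p : antiperiodic f p ->
  symmetric_about n f s -> symmetric_about n (fun x => f (x + t)) s ->
  periodic f t \/ antiperiodic f t.
Proof.
move=> fp fs fts; apply: (antiperiodic_dvd (antiperiodic_gcd fp _)).
  exact: symmetric_about_periodic fs fts.
exact: dvdn_gcdr.
Qed.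

End TwoAxes.

Definition dyadic_divisor N M := (M %| N) && 2.-nat (N %/ M).

Section DyadicDivisors.
Variable N : nat.
Hypothesis N_gt0 : 0 < N.

Lemma dyadic_divisorP M :
  reflect (exists k, N = M * 2 ^ k) (dyadic_divisor N M).
Proof.
apply: (iffP andP) => [[/divnK def_N /p_natP [k def_q]] | [k def_N]].
  by exists k; rewrite -def_q mulnC def_N.
have M_gt0 : 0 < M by move: N_gt0; rewrite def_N muln_gt0 => /andP [].
by rewrite def_N dvdn_mulr // mulKn // pnatX pnat_id.
Qed.

Lemma dyadic_divisor_gt0 M : dyadic_divisor N M -> 0 < M.
Proof.
by case/dyadic_divisorP => k def_N; move: N_gt0; rewrite def_N muln_gt0 => /andP [].
Qed.

Lemma dyadic_divisor_dvdn M : dyadic_divisor N M -> M %| N.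
Proof. by case/andP. Qed.

Lemma dyadic_antiperiod_uniq f M1 M2 :
  dyadic_divisor N M1 -> dyadic_divisor N M2 ->
  antiperiodic f M1 -> antiperiodic f M2 -> M1 = M2.
Proof.
move=> /dyadic_divisorP [a def1] /dyadic_divisorP [b def2].
wlog le_ab : M1 M2 a b def1 def2 / a <= b.
  move=> IH f1 f2; case: (leqP a b) => [le_ab | /ltnW le_ba].
    exact: IH def1 def2 le_ab f1 f2.
  exact/esym/(IH _ _ _ _ def2 def1 le_ba f2 f1).
have def_M1 : M1 = 2 ^ (b - a) * M2.
  apply/eqP; rewrite -(eqn_pmul2r (expn_gt0 2 a)) -def1 def2 mulnAC -expnD.
  by rewrite subnK // mulnC.
move=> f1 f2; rewrite def_M1 in f1 *.
by rewrite (antiperiodic_exp2 f2 f1) mul1n.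
Qed.

Lemma exists_dyadic_antiperiod f k : periodic f (2 * N) -> antiperiodic f k ->
  exists2 M, dyadic_divisor N M & antiperiodic f M.
Proof.
move=> fn fk; have fh := antiperiodic_gcd fk fn; set h := gcdn k N in fh.
have def_N : N = N %/ h * h by rewrite divnK ?dvdn_gcdr.
have [|m odd_m def_c] := pfactor_coprime (isT : prime 2) (_ : 0 < N %/ h).
  by move: N_gt0; rewrite {1}def_N muln_gt0 => /andP [].
exists (m * h).
  by apply/dyadic_divisorP; exists (logn 2 (N %/ h)); rewrite mulnAC -def_c.
move=> x; rewrite (antiperiodicM fh).
by move: odd_m; rewrite coprime_sym coprimen2 => ->.
Qed.

End DyadicDivisors.

Section Beads.
Variable n : nat.
Hypothesis n_gt0 : 0 < n.
Implicit Types v w : n.-tuple bool.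

Definition bead w x := nth false w (x %% n).

Definition word_of (f : nat -> bool) : n.-tuple bool := [tuple f i | i < n].

Lemma bead_periodic w : periodic (bead w) n.
Proof. by move=> x; rewrite /bead modnDr. Qed.

Lemma bead_mod w x : bead w (x %% n) = bead w x.
Proof. by rewrite /bead modn_mod. Qed.

Lemma bead_congr w a b : a = b %[mod n] -> bead w a = bead w b.
Proof. by rewrite -bead_mod => ->; rewrite bead_mod. Qed.

Lemma bead_inj v w : bead v =1 bead w -> v = w.
Proof.
move=> eq_vw; apply/val_inj/(@eq_from_nth _ false); first by rewrite !size_tuple.
by move=> i; rewrite size_tuple => lt_in; have := eq_vw i; rewrite /bead modn_small.
Qed.

Lemma bead_word f x : bead (word_of f) x = f (x %% n).
Proof. exact: (nth_mktuple f false (Ordinal (ltn_pmod x n_gt0))). Qed.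

Lemma bead_rot w k x : k < n -> bead (rot_tuple k w) x = bead w (x + k).
Proof.
move=> lt_kn; rewrite /bead /= nth_rot ?size_tuple ?ltn_pmod ?modnDml //.
exact: ltnW.
Qed.

Lemma bead_complement w x : bead (complement w) x = ~~ bead w x.
Proof. by rewrite /bead (nth_map false) // size_tuple ltn_pmod. Qed.

Lemma bead_mirror w x : bead (mirror w) x = bead w (n - (x %% n).+1).
Proof.
have lt_xn := ltn_pmod x n_gt0.
by rewrite /bead nth_rev size_tuple // [(n - _) %% n]modn_small //; lia.
Qed.

Lemma mem_necklaceP v w :
  reflect (exists k, forall x, bead v x = bead w (x + k)) (v \in necklace w).
Proof.
apply: (iffP imsetP) => [[k _ ->] | [k eq_vw]].
  by exists k => x; rewrite bead_rot.
exists (Ordinal (ltn_pmod k n_gt0)) => //; apply: bead_inj => x.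
by rewrite bead_rot ?ltn_pmod // eq_vw; apply: bead_congr; rewrite modnDmr.
Qed.

Lemma necklace_refl w : w \in necklace w.
Proof. by apply/mem_necklaceP; exists 0 => x; rewrite addn0. Qed.

Lemma necklace_eq v w : v \in necklace w -> necklace v = necklace w.
Proof.
case/mem_necklaceP => k eq_vw; apply/setP => u; apply/mem_necklaceP/mem_necklaceP.
  by case=> j eq_uv; exists (j + k) => x; rewrite eq_uv eq_vw addnA.
case=> j eq_uw; exists (j + (n - k %% n)) => x.
rewrite eq_uw eq_vw; apply: bead_congr.
have lt_k := ltn_pmod k n_gt0; have def_k := divn_eq k n.
by apply/eqn_modP; exists (k %/ n).+1, 0; lia.
Qed.

Lemma achiralP w : reflect (exists s, symmetric_about n (bead w) s) (achiral w).
Proof.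
apply: (iffP idP) => [/mem_necklaceP [k0 eq_k0] | [s ws]].
  pose k := k0 %% n; have lt_kn : k < n by rewrite ltn_pmod.
  have eq_k x : bead (mirror w) x = bead w (x + k).
    by rewrite eq_k0; apply: bead_congr; rewrite modnDmr.
  exists (k + n.-1) => a b /eqn_modP [p [q eq_ab]].
  pose x := a + (n - k).
  have -> : bead w a = bead w (x + k).
    by apply: bead_congr; rewrite /x -addnA subnK ?modnDr // ltnW.
  rewrite -eq_k bead_mirror; apply: bead_congr; apply/eqn_modP.
  have lt_x := ltn_pmod x n_gt0; have def_x := divn_eq x n.
  by exists q.+1, (p + x %/ n); move: lt_x def_x; rewrite /x; lia.
apply/mem_necklaceP; exists s.+1 => x; rewrite bead_mirror; apply: ws.
have lt_x := ltn_pmod x n_gt0; have def_x := divn_eq x n.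
by apply/eqn_modP; exists 0, (x %/ n).+1; move: lt_x def_x; set r := x %% n; lia.
Qed.

Lemma selfcompP w : reflect (exists k, antiperiodic (bead w) k) (selfcomp w).
Proof.
apply: (iffP idP) => [/mem_necklaceP [k eq_k] | [k wk]].
  by exists k => x; rewrite -eq_k bead_complement.
by apply/mem_necklaceP; exists k => x; rewrite bead_complement wk.
Qed.

Definition antiperiodicb w p := [forall x : 'I_n, bead w (x + p) == ~~ bead w x].

Definition symmetricb w s :=
  [forall x : 'I_n, forall y : 'I_n,
     (x + y == s %[mod n]) ==> (bead w x == bead w y)].

Lemma antiperiodicbP w p : reflect (antiperiodic (bead w) p) (antiperiodicb w p).
Proof.
apply: (iffP forallP) => [wp x | wp x]; last by rewrite wp.
have /eqP := wp (Ordinal (ltn_pmod x n_gt0)); rewrite /= bead_mod => <-.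
by apply: bead_congr; rewrite modnDml.
Qed.

Lemma symmetricbP w s : reflect (symmetric_about n (bead w) s) (symmetricb w s).
Proof.
apply: (iffP forallP) => [ws a b ab_s | ws x]; last first.
  by apply/forallP => y; apply/implyP => /eqP xy_s; apply/eqP/ws.
have /forallP/(_ (Ordinal (ltn_pmod b n_gt0)))/implyP :=
  ws (Ordinal (ltn_pmod a n_gt0)).
by rewrite /= modnDm ab_s eqxx !bead_mod => /(_ isT)/eqP.
Qed.

End Beads.

Definition axis M : nat := ~~ odd M.

Section CanonicalWords.
Variable N : nat.
Hypothesis N_gt0 : 0 < N.
Local Notation n := (2 * N).
Implicit Types v w : n.-tuple bool.

Let n_gt0 : 0 < n. Proof. by rewrite muln_gt0. Qed.

Definition canonical M w :=
  [&& antiperiodicb w M, symmetricb w (axis M) & ~~ bead w 0].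

Definition canonical_words :=
  [set w | [exists M : 'I_N.+1, dyadic_divisor N M && canonical M w]].

Lemma canonicalP M w :
  reflect [/\ antiperiodic (bead w) M, symmetric_about n (bead w) (axis M)
            & ~~ bead w 0]
          (canonical M w).
Proof.
apply: (iffP and3P) => [[/(antiperiodicbP n_gt0) wM /(symmetricbP n_gt0) ws w0] |
                         [wM ws w0]].
  by split.
by split=> //; [apply/(antiperiodicbP n_gt0) | apply/(symmetricbP n_gt0)].
Qed.

Lemma mem_canonical_words w :
  reflect (exists2 M, dyadic_divisor N M & canonical M w) (w \in canonical_words).
Proof.
rewrite inE; apply: (iffP existsP) => [[M /andP [dM cM]] | [M dM cM]].
  by exists M.
have le_MN : M < N.+1 by rewrite ltnS dvdn_leq ?dyadic_divisor_dvdn.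
by exists (Ordinal le_MN); rewrite /= dM.
Qed.

Lemma canonical_sc_achiral M w : canonical M w -> achiral w && selfcomp w.
Proof.
case/canonicalP => wM ws _; apply/andP; split.
  by apply/(achiralP n_gt0); exists (axis M).
by apply/(selfcompP n_gt0); exists M.
Qed.

Lemma canonical_rot w M t : antiperiodic (bead w) M ->
  symmetric_about n (bead w) (axis M + 2 * t) ->
  canonical M (rot_tuple ((if bead w t then t + M else t) %% n) w).
Proof.
set u := if _ then _ else _ => wM ws; have wt := symmetric_about_shift ws.
have bead_u x : bead (rot_tuple (u %% n) w) x = bead w (x + u).
  by rewrite (bead_rot n_gt0) ?ltn_pmod //; apply: bead_congr; rewrite modnDmr.
apply/canonicalP; split=> [x | a b ab_s | ]; rewrite ?bead_u.
- by rewrite addnAC wM.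
- by rewrite /u; case: ifP => _; rewrite ?addnA ?wM (wt a b ab_s).
- by rewrite add0n /u; case: ifP => [wt0 | ->]; rewrite ?wM ?wt0.
Qed.

Lemma necklace_canonical w : achiral w -> selfcomp w ->
  exists2 v, v \in canonical_words & v \in necklace w.
Proof.
move=> /(achiralP n_gt0) [s ws] /(selfcompP n_gt0) [k wk].
have [M dM wM] := exists_dyadic_antiperiod N_gt0 (bead_periodic w) wk.
have le_Mn : M <= n.
  by have := dvdn_leq N_gt0 (dyadic_divisor_dvdn dM); lia.
have odd_sM := symmetric_about_antiperiodic_odd (bead_periodic w) le_Mn wM ws.
have def_s : s = axis M + 2 * (s - axis M)./2.
  by move: odd_sM; rewrite /axis oddD; case: (odd M) => /=; lia.
set t := (s - axis M)./2 in def_s; rewrite def_s in ws.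
set u := if bead w t then t + M else t.
exists (rot_tuple (u %% n) w).
  by apply/mem_canonical_words; exists M => //; apply: canonical_rot.
apply/(mem_necklaceP n_gt0); exists (u %% n) => x.
by rewrite (bead_rot n_gt0) ?ltn_pmod.
Qed.

Lemma canonical_necklace_uniq v w : v \in canonical_words ->
  w \in canonical_words -> v \in necklace w -> v = w.
Proof.
case/mem_canonical_words => M dM /canonicalP [vM vs v0].
case/mem_canonical_words => M' dM' /canonicalP [wM' ws w0] vw.
have [k eq_vw] := mem_necklaceP n_gt0 _ _ vw.
have [j eq_wv] : exists j, forall x, bead w x = bead v (x + j).
  apply/(mem_necklaceP n_gt0).
  by rewrite (necklace_eq n_gt0 vw) (necklace_refl n_gt0).
have wM : antiperiodic (bead w) M.
  by move=> x; rewrite !eq_wv; exact: (antiperiodic_shift j vM x).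
have def_M' := dyadic_antiperiod_uniq N_gt0 dM' dM wM' wM; subst M'.
have wks : symmetric_about n (fun x => bead w (x + k)) (axis M).
  by move=> a b ab_s; rewrite -!eq_vw; apply: vs.
have [wk | wk] := shift_periodic_or_antiperiodic n_gt0 wM ws wks.
  by apply: bead_inj => x; rewrite eq_vw wk.
by move: v0; rewrite eq_vw wk w0.
Qed.

Lemma card_sc_achiral_necklaces :
  #|sc_achiral_necklaces n| = #|canonical_words|.
Proof.
have -> : sc_achiral_necklaces n = (@necklace n) @: canonical_words.
  apply/setP => c; apply/imsetP/imsetP => [[w] | [w cw ->]].
    rewrite inE => /andP [w_ach w_sc] ->.
    have [v cv vw] := necklace_canonical w_ach w_sc.
    by exists v => //; rewrite (necklace_eq n_gt0 vw).
  exists w => //; rewrite inE.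
  by case/mem_canonical_words: cw => M _ /canonical_sc_achiral.
apply: card_in_imset => v w cv cw eq_vw.
by apply: canonical_necklace_uniq cv cw _; rewrite -eq_vw (necklace_refl n_gt0).
Qed.

End CanonicalWords.

Section Pairing.
Variable N : nat.
Hypothesis N_gt1 : 1 < N.
Local Notation n := (2 * N).
Implicit Types w : n.-tuple bool.

Let N_gt0 : 0 < N. Proof. exact: ltnW. Qed.
Let n_gt0 : 0 < n. Proof. by rewrite muln_gt0. Qed.

Lemma dyadic_divisor1E : dyadic_divisor N 1 = dyadic_divisor N 2.
Proof.
apply/(dyadic_divisorP N_gt0)/(dyadic_divisorP N_gt0) => -[k def_N].
  case: k def_N => [|k] def_N; first by move: N_gt1; rewrite def_N.
  by exists k; rewrite def_N expnS mul1n.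
by exists k.+1; rewrite def_N expnS mul1n.
Qed.

Lemma dyadic_divisor2_even : dyadic_divisor N 2 -> ~~ odd N.
Proof. by case/(dyadic_divisorP N_gt0) => k ->; rewrite oddM. Qed.

Definition alternating : n.-tuple bool := word_of n odd.
Definition alternating2 : n.-tuple bool := word_of n (fun i => odd i./2).

Lemma bead_alternating x : bead alternating x = odd x.
Proof. by rewrite (bead_word n_gt0) odd_mod // oddM. Qed.

Lemma bead_alternating2 x : ~~ odd N -> bead alternating2 x = odd x./2.
Proof.
move=> even_N; rewrite (bead_word n_gt0).
have := divn_eq x n; have := ltn_pmod x n_gt0.
set r := x %% n; set q := x %/ n; move: even_N; lia.
Qed.

Lemma alternating2_neq : alternating2 != alternating.
Proof.
apply/eqP => /(congr1 (fun u => bead u 1)).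
by rewrite bead_alternating (bead_word n_gt0) modn_small //; lia.
Qed.

Lemma canonical1_alternating w : canonical 1 w -> w = alternating.
Proof.
case/(canonicalP N_gt0) => w1 _ w0; apply: bead_inj => x; rewrite bead_alternating.
elim: x => [|x IHx]; first exact: negbTE.
by rewrite -[x.+1]addn1 w1 IHx addn1.
Qed.

Lemma canonical_alternating : canonical 1 alternating.
Proof.
apply/(canonicalP N_gt0); split=> [x | a b /eqn_modP [p [q eq_ab]] | ].
- by rewrite !bead_alternating addn1.
- by rewrite !bead_alternating; move: eq_ab; rewrite /axis /=; lia.
- by rewrite bead_alternating.
Qed.

Lemma canonical2_alternating2 w : ~~ odd N -> canonical 2 w -> w = alternating2.
Proof.
move=> even_N /(canonicalP N_gt0) [w2 ws w0]; apply: bead_inj => x.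
rewrite bead_alternating2 //.
have w1 : bead w 1 = bead w 0 by apply: ws.
suff : bead w x = odd x./2 /\ bead w x.+1 = odd x.+1./2 by case.
elim: x => [|x [IH0 IH1]]; first by rewrite w1 (negbTE w0).
by split=> //; have := w2 x; rewrite addn2 IH0 => ->.
Qed.

Lemma canonical_alternating2 : ~~ odd N -> canonical 2 alternating2.
Proof.
move=> even_N; apply/(canonicalP N_gt0).
split=> [x | a b /eqn_modP [p [q eq_ab]] | ].
- by rewrite !bead_alternating2 //; lia.
- rewrite !bead_alternating2 //; have [K def_N] : exists K, N = 2 * K.
    by exists N./2; move: even_N; lia.
  by move: eq_ab; rewrite /axis /= def_N; lia.
- by rewrite bead_alternating2.
Qed.

(* A pair of positions modulo M, mirror images about the axis and distinct
   from 0, so that toggling them keeps all three canonical conditions. *)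
Definition flip_pos M y := (y %% M == 2) || (y %% M == M + axis M - 2).

Definition flip M w := word_of n (fun i => bead w i (+) flip_pos M i).

Lemma flip_pos_symmetric M a b : 2 < M ->
  a + b = axis M %[mod M] -> flip_pos M a = flip_pos M b.
Proof.
move=> M_gt2; have axis_le1 : axis M <= 1 by rewrite /axis; case: (~~ odd M).
rewrite -modnDm [axis M %% M]modn_small; last by lia.
have := ltn_pmod a (ltnW (ltnW M_gt2)); have := ltn_pmod b (ltnW (ltnW M_gt2)).
rewrite /flip_pos; set x := a %% M; set y := b %% M => lt_y lt_x.
case: (ltnP (x + y) M) => [lt_xy | le_xy].
  by rewrite modn_small // => xy_s; do 4! case: eqP => ?; lia.
rewrite -(subnK le_xy) modnDr modn_small; last by lia.
by move=> xy_s; do 4! case: eqP => ?; lia.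
Qed.

Lemma bead_flip M w x : M %| n -> bead (flip M w) x = bead w x (+) flip_pos M x.
Proof.
move=> dvd_Mn; rewrite (bead_word n_gt0) bead_mod /flip_pos.
by rewrite !(modn_dvdm _ dvd_Mn).
Qed.

Lemma flipK M w : M %| n -> flip M (flip M w) = w.
Proof.
by move=> dvd_Mn; apply: bead_inj => x; rewrite !bead_flip // -addbA addbb addbF.
Qed.

Lemma flip_neq M w : 2 < M -> M %| n -> flip M w != w.
Proof.
move=> M_gt2 dvd_Mn; apply/negP => /eqP flip_w.
have := bead_flip w 2 dvd_Mn; rewrite flip_w /flip_pos modn_small // eqxx.
by case: (bead w 2).
Qed.

Lemma canonical_flip M w : 2 < M -> M %| n ->
  canonical M w -> canonical M (flip M w).
Proof.
move=> M_gt2 dvd_Mn /(canonicalP N_gt0) [wM ws w0].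
apply/(canonicalP N_gt0); split=> [x | a b ab_s | ]; rewrite ?bead_flip //.
- by rewrite wM /flip_pos modnDr addNb.
- rewrite (ws a b ab_s) (@flip_pos_symmetric M a b M_gt2) //.
  by rewrite -(modn_dvdm _ dvd_Mn) ab_s (modn_dvdm _ dvd_Mn).
- by rewrite (negbTE w0) /flip_pos mod0n; case: (odd M) => /=; lia.
Qed.

Definition level w :=
  if [pick M : 'I_N.+1 | dyadic_divisor N M && canonical M w] is Some M
  then nat_of_ord M else 0.

Lemma levelE M w : dyadic_divisor N M -> canonical M w -> level w = M.
Proof.
move=> dM cM; rewrite /level; case: pickP => [M' /andP [dM' cM'] | no_M].
  case/(canonicalP N_gt0): cM => wM _ _; case/(canonicalP N_gt0): cM' => wM' _ _.
  by rewrite (dyadic_antiperiod_uniq N_gt0 dM' dM wM' wM).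
have lt_MN : M < N.+1 by rewrite ltnS dvdn_leq ?dyadic_divisor_dvdn.
by have := no_M (Ordinal lt_MN); rewrite /= dM cM.
Qed.

Definition partner w :=
  if level w == 1 then alternating2
  else if level w == 2 then alternating
  else flip (level w) w.

Lemma partner_spec w : w \in canonical_words N ->
  [/\ partner w \in canonical_words N, partner (partner w) = w & partner w != w].
Proof.
case/(mem_canonical_words N_gt0) => M dM cM; rewrite /partner (levelE dM cM).
have [M1 | M_neq1] := eqVneq M 1; first subst M.
  rewrite dyadic_divisor1E in dM.
  have cA2 := canonical_alternating2 (dyadic_divisor2_even dM).
  rewrite (levelE dM cA2) (canonical1_alternating cM).
  split=> //; last exact: alternating2_neq.
  by apply/(mem_canonical_words N_gt0); exists 2.
have [M2 | M_neq2] := eqVneq M 2; first subst M.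
  rewrite (canonical2_alternating2 (dyadic_divisor2_even dM) cM).
  rewrite -dyadic_divisor1E in dM; have cA := canonical_alternating.
  rewrite (levelE dM cA).
  split=> //; last by rewrite eq_sym alternating2_neq.
  by apply/(mem_canonical_words N_gt0); exists 1.
have M_gt2 : 2 < M by move: (dyadic_divisor_gt0 N_gt0 dM) M_neq1 M_neq2; lia.
have dvd_Mn : M %| n by rewrite dvdn_mull ?dyadic_divisor_dvdn.
have cF := canonical_flip M_gt2 dvd_Mn cM.
rewrite (levelE dM cF) (negPf M_neq1) (negPf M_neq2) flipK // flip_neq //.
by split=> //; apply/(mem_canonical_words N_gt0); exists M.
Qed.

End Pairing.

Theorem lemma2p3 (N : nat) (hN : 1 < N) :
  ~~ odd #|sc_achiral_necklaces (2 * N)|.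
Proof.
rewrite (card_sc_achiral_necklaces (ltnW hN)).
by apply: (involution_card_even (g := @partner N)) => w /(partner_spec hN) [].
Qed.
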